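(* Let $\alpha>0$ be such that $d_{g,\alpha}(p,q)=\|p^{-1}\cdot q\|_{g,\alpha}$ is a distance on $\mathbb H$ (in particular for any $0<\alpha\le 2$), where $\|(x,y,z)\|_{g,\alpha}=\big((x^2+y^2)^2+4\alpha^2z^2\big)^{1/4}$. Then BCP does not hold for $d_{g,\alpha}$ on $\mathbb H$. In particular BCP fails for the Cygan–Korányi distance $d_{g,2}$.
   Context: $\mathbb H=\mathbb R^3$ with group law $(x,y,z)\cdot(x',y',z')=(x+x',y+y',z+z'+\tfrac12(xy'-yx'))$. BCP holds for $d$ if there is $N\geq1$ such that for every bounded $A$ and every family $\mathcal B$ of closed balls with each point of $A$ the center of some ball of $\mathcal B$, some subfamily $\mathcal F\subset\mathcal B$ satisfies $\chi_A\le\sum_{B\in\mathcal F}\chi_B\le N$. *)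

From Stdlib Require Import Reals List.
Open Scope R_scope.

Definition Hpt : Type := (R * R * R)%type.

Definition Hmul (p q : Hpt) : Hpt :=
  match p, q with
  | (x, y, z), (x', y', z') =>
      (x + x', y + y', z + z' + / 2 * (x * y' - y * x'))
  end.

Definition Hinv (p : Hpt) : Hpt :=
  match p with (x, y, z) => (- x, - y, - z) end.

Definition gnorm (alpha : R) (p : Hpt) : R :=
  match p with
  | (x, y, z) => sqrt (sqrt ((x ^ 2 + y ^ 2) ^ 2 + 4 * alpha ^ 2 * z ^ 2))
  end.

Definition dg (alpha : R) (p q : Hpt) : R := gnorm alpha (Hmul (Hinv p) q).

Definition is_distance (d : Hpt -> Hpt -> R) : Prop :=
  (forall p q, 0 <= d p q) /\
  (forall p q, d p q = 0 <-> p = q) /\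
  (forall p q, d p q = d q p) /\
  (forall p q r, d p r <= d p q + d q r).

Definition is_ball_at (d : Hpt -> Hpt -> R) (S : Hpt -> Prop) (c : Hpt) (r : R) : Prop :=
  0 < r /\ forall z, S z <-> d c z <= r.

Definition is_closed_ball (d : Hpt -> Hpt -> R) (S : Hpt -> Prop) : Prop :=
  exists c r, is_ball_at d S c r.

Definition bounded (d : Hpt -> Hpt -> R) (A : Hpt -> Prop) : Prop :=
  exists c R0, forall a, A a -> d c a <= R0.

Definition same_set (S T : Hpt -> Prop) : Prop := forall z, S z <-> T z.

(* sum_{B in F} chi_B (y) <= N : at most N (distinct) balls of F contain y *)
Definition multiplicity_le (F : (Hpt -> Prop) -> Prop) (N : nat) : Prop :=
  forall (y : Hpt) (l : list (Hpt -> Prop)),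
    (forall S, In S l -> F S /\ S y) ->
    (forall i j, (i < length l)%nat -> (j < length l)%nat -> i <> j ->
       ~ same_set (nth i l (fun _ => False)) (nth j l (fun _ => False))) ->
    (length l <= N)%nat.

Definition BCP (d : Hpt -> Hpt -> R) : Prop :=
  exists N : nat, (1 <= N)%nat /\
    forall (A : Hpt -> Prop) (B : (Hpt -> Prop) -> Prop),
      bounded d A ->
      (forall S, B S -> is_closed_ball d S) ->
      (forall a, A a -> exists S r, B S /\ is_ball_at d S a r) ->
      exists F : (Hpt -> Prop) -> Prop,
        (forall S, F S -> B S) /\
        (forall a, A a -> exists S, F S /\ S a) /\
        multiplicity_le F N.

(* Fix n and put O = 0. We build points P_0, ..., P_n such that the closed
   ball B_k of center P_k through O contains no other P_m. A covering of
   {P_0, ..., P_n} extracted from {B_0, ..., B_n} must then use every B_k, and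
   these n + 1 balls all contain O, so no multiplicity bound N holds.
   The points are P_k = delta_(L^k) (1, -k, -z), where delta_l is the dilation
   (x, y, z) |-> (l x, l y, l^2 z), under which the fourth power of the gauge is
   homogeneous of degree 4. For i < j this reduces the comparison to the pair
   (1, -i, -z) and delta_s (1, -j, -z) with s = L^(j-i) small: the horizontal
   part of the gauge changes by O(s (1 + n^2)), while the group law adds
   s (j - i) / 2 to the vertical part, which with a large height z is a gain of
   order s z that wins. *)

From Pilot Require Import Defs.
From Stdlib Require Import Reals List Lra Psatz Lia.
Open Scope R_scope.

Section CrowdedBalls.

Variable d : Hpt -> Hpt -> R.
Hypothesis d_refl : forall p, d p p = 0.

Definition ball_through (c o : Hpt) : Hpt -> Prop := fun q => d c q <= d c o.

Definition crowded (O : Hpt) (P : nat -> Hpt) (n : nat) : Prop :=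
  (forall k, (k <= n)%nat -> 0 < d (P k) O) /\
  (forall m k, (m <= n)%nat -> (k <= n)%nat -> m <> k ->
     d (P m) O < d (P m) (P k)).

Lemma ball_through_is_ball (c o : Hpt) :
  0 < d c o -> is_ball_at d (ball_through c o) c (d c o).
Proof. intros Hpos. split; [exact Hpos | reflexivity]. Qed.

(* qualified: [Reals] exports another [bounded] *)
Lemma bounded_finite_range (P : nat -> Hpt) (n : nat) :
  Defs.bounded d (fun p => exists k, (k <= n)%nat /\ p = P k).
Proof.
  exists (P 0%nat).
  induction n as [|n [R0 HR0]].
  - exists (d (P 0%nat) (P 0%nat)). intros a [k [Hk ->]].
    replace k with 0%nat by lia. lra.
  - exists (Rmax R0 (d (P 0%nat) (P (S n)))). intros a [k [Hk ->]].
    destruct (Nat.eq_dec k (S n)) as [->|Hkn]; [apply Rmax_r|].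
    eapply Rle_trans; [apply HR0; exists k; split; [lia|reflexivity] | apply Rmax_l].
Qed.

Lemma multiplicity_le_family (F : (Hpt -> Prop) -> Prop) (Bs : nat -> Hpt -> Prop)
    (y : Hpt) (n N : nat) :
  (forall k, (k <= n)%nat -> F (Bs k) /\ Bs k y) ->
  (forall i j, (i <= n)%nat -> (j <= n)%nat -> i <> j -> ~ same_set (Bs i) (Bs j)) ->
  multiplicity_le F N -> (S n <= N)%nat.
Proof.
  intros HF Hdistinct Hmult.
  set (l := map Bs (seq 0 (S n))).
  assert (Hlen : length l = S n) by (unfold l; rewrite length_map, length_seq; reflexivity).
  assert (Hnth : forall i, (i < S n)%nat -> nth i l (fun _ => False) = Bs i).
  { intros i Hi. unfold l.
    rewrite (nth_indep _ _ (Bs 0%nat)) by (rewrite length_map, length_seq; lia).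
    rewrite map_nth, seq_nth by lia. reflexivity. }
  rewrite <- Hlen. apply (Hmult y).
  - intros S HS. unfold l in HS. apply in_map_iff in HS.
    destruct HS as [k [<- Hk]]. apply in_seq in Hk. apply HF. lia.
  - intros i j Hi Hj Hij. rewrite Hlen in Hi, Hj.
    rewrite (Hnth i Hi), (Hnth j Hj). apply Hdistinct; lia.
Qed.

Lemma not_BCP_of_crowded :
  (forall n, exists O P, crowded O P n) -> ~ BCP d.
Proof.
  intros Hcrowd [N [_ Hbcp]].
  destruct (Hcrowd N) as [O [P [Hpos Hsep]]].
  set (Ball := fun k => ball_through (P k) O).
  assert (Hcenter : forall k, (k <= N)%nat -> Ball k (P k)).
  { intros k Hk. unfold Ball, ball_through. rewrite d_refl. apply Rlt_le, Hpos, Hk. }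
  assert (Hmiss : forall m k, (m <= N)%nat -> (k <= N)%nat -> m <> k -> ~ Ball m (P k)).
  { intros m k Hm Hk Hmk. unfold Ball, ball_through.
    apply Rlt_not_le, Hsep; assumption. }
  destruct (Hbcp (fun p => exists k, (k <= N)%nat /\ p = P k)
                 (fun S => exists k, (k <= N)%nat /\ S = Ball k))
    as [F [HFB [Hcover Hmult]]].
  - apply bounded_finite_range.
  - intros S [k [Hk ->]]. exists (P k), (d (P k) O).
    apply ball_through_is_ball, Hpos, Hk.
  - intros a [k [Hk ->]]. exists (Ball k), (d (P k) O). split.
    + exists k. split; [exact Hk | reflexivity].
    + apply ball_through_is_ball, Hpos, Hk.
  - assert (Huses : forall k, (k <= N)%nat -> F (Ball k)).
    { intros k Hk. destruct (Hcover (P k)) as [S [HS HSk]]; [exists k; auto|].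
      destruct (HFB S HS) as [m [Hm ->]].
      destruct (Nat.eq_dec m k) as [->|Hmk]; [exact HS|].
      exfalso. exact (Hmiss m k Hm Hk Hmk HSk). }
    enough (S N <= N)%nat by lia.
    apply (multiplicity_le_family F Ball O N N); [|intros i j Hi Hj Hij Hsame|exact Hmult].
    + intros k Hk. split; [apply Huses, Hk|]. unfold Ball, ball_through. lra.
    + apply (Hmiss j i Hj Hi); [lia|]. apply Hsame, Hcenter, Hi.
Qed.

End CrowdedBalls.

Definition Horigin : Hpt := (0, 0, 0).

Definition Hdil (l : R) (p : Hpt) : Hpt :=
  match p with (x, y, z) => (l * x, l * y, l ^ 2 * z) end.

Definition gnorm4 (alpha : R) (p : Hpt) : R :=
  match p with (x, y, z) => (x ^ 2 + y ^ 2) ^ 2 + 4 * alpha ^ 2 * z ^ 2 end.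

Definition dg4 (alpha : R) (p q : Hpt) : R := gnorm4 alpha (Hmul (Hinv p) q).

Lemma gnorm4_ge0 (alpha : R) (p : Hpt) : 0 <= gnorm4 alpha p.
Proof.
  destruct p as [[x y] z]. simpl.
  pose proof (pow2_ge_0 (x * x + y * y)). pose proof (pow2_ge_0 z). nra.
Qed.

Lemma dg_sqrt_sqrt (alpha : R) (p q : Hpt) : dg alpha p q = sqrt (sqrt (dg4 alpha p q)).
Proof. destruct p as [[x y] z], q as [[x' y'] z']. reflexivity. Qed.

Lemma dg_lt_of_dg4_lt (alpha : R) (p q p' q' : Hpt) :
  dg4 alpha p q < dg4 alpha p' q' -> dg alpha p q < dg alpha p' q'.
Proof.
  intros H. rewrite !dg_sqrt_sqrt.
  apply sqrt_lt_1_alt. split; [apply sqrt_pos|].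
  apply sqrt_lt_1_alt. split; [apply gnorm4_ge0 | exact H].
Qed.

Lemma dg_pos_of_dg4_pos (alpha : R) (p q : Hpt) : 0 < dg4 alpha p q -> 0 < dg alpha p q.
Proof. intros H. rewrite dg_sqrt_sqrt. apply sqrt_lt_R0, sqrt_lt_R0, H. Qed.

Lemma dg_refl (alpha : R) (p : Hpt) : dg alpha p p = 0.
Proof.
  rewrite dg_sqrt_sqrt.
  replace (dg4 alpha p p) with 0 by (destruct p as [[x y] z]; unfold dg4; simpl; ring).
  rewrite sqrt_0. apply sqrt_0.
Qed.

Lemma dg4_sym (alpha : R) (p q : Hpt) : dg4 alpha p q = dg4 alpha q p.
Proof. destruct p as [[x y] z], q as [[x' y'] z']. unfold dg4; simpl. ring. Qed.

Lemma dg4_dil (alpha l : R) (p q : Hpt) :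
  dg4 alpha (Hdil l p) (Hdil l q) = l ^ 4 * dg4 alpha p q.
Proof. destruct p as [[x y] z], q as [[x' y'] z']. unfold dg4; simpl. ring. Qed.

Lemma Hdil_origin (l : R) : Hdil l Horigin = Horigin.
Proof. unfold Hdil, Horigin. f_equal; [f_equal|]; ring. Qed.

Lemma Hdil_mul (a s : R) (p : Hpt) : Hdil a (Hdil s p) = Hdil (a * s) p.
Proof. destruct p as [[x y] z]. unfold Hdil. f_equal; [f_equal|]; ring. Qed.

Section GaugeComparison.

Variables (alpha z M I J s : R).
Hypotheses (alpha_pos : 0 < alpha) (z_pos : 0 < z) (height_eq : alpha ^ 2 * z = 4 * M ^ 2)
  (I_ge0 : 0 <= I) (I_lt_J : I + 1 <= J) (J_bound : 1 + J ^ 2 <= M)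
  (s_pos : 0 < s) (s_height : 4 * s * z <= 1) (s_bound : s * M <= 1).

Lemma horizontal_loss :
  ((s - 1) ^ 2 + (I - J * s) ^ 2) ^ 2 - (1 + I ^ 2) ^ 2 >= - 6 * s * M ^ 2.
Proof.
  set (W := 1 + I ^ 2). set (E := (s - 1) ^ 2 + (I - J * s) ^ 2).
  assert (HE : E = W - 2 * s * (1 + I * J) + s ^ 2 * (1 + J ^ 2)) by (unfold E, W; ring).
  assert (HW : 1 <= W <= M) by (unfold W; nra).
  assert (HC : 1 <= 1 + I * J <= M) by nra.
  assert (Hs1 : s <= 1) by nra.
  assert (HE0 : 0 <= E) by (unfold E; nra).
  assert (HEW : E - W >= - 2 * s * M) by nra.
  assert (HEW2 : E + W <= 3 * M) by nra.
  destruct (Rle_dec W E); [nra|].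
  replace (E ^ 2 - W ^ 2) with ((E - W) * (E + W)) by ring. nra.
Qed.

Lemma vertical_gain : (z * (1 - s ^ 2) + s * (J - I) / 2) ^ 2 - z ^ 2 >= s * z / 2.
Proof.
  set (T := z * (1 - s ^ 2) + s * (J - I) / 2).
  assert (HT : T - z >= s / 4) by (unfold T; nra).
  replace (T ^ 2 - z ^ 2) with ((T - z) * (T + z)) by ring. nra.
Qed.

Lemma step_gauge_gt_start :
  (1 + I ^ 2) ^ 2 + 4 * alpha ^ 2 * z ^ 2 <
  ((s - 1) ^ 2 + (I - J * s) ^ 2) ^ 2 + 4 * alpha ^ 2 * (z * (1 - s ^ 2) + s * (J - I) / 2) ^ 2.
Proof.
  pose proof horizontal_loss. pose proof vertical_gain.
  assert (0 < s * M ^ 2) by (apply Rmult_lt_0_compat; nra).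
  (* vertical gain >= 2 alpha^2 s z = 8 s M^2 > 6 s M^2 >= horizontal loss *)
  nra.
Qed.

Lemma step_gauge_gt_scaled_end :
  s ^ 4 * ((1 + J ^ 2) ^ 2 + 4 * alpha ^ 2 * z ^ 2) <
  ((s - 1) ^ 2 + (I - J * s) ^ 2) ^ 2 + 4 * alpha ^ 2 * (z * (1 - s ^ 2) + s * (J - I) / 2) ^ 2.
Proof.
  pose proof step_gauge_gt_start.
  assert (HsV : 0 <= s * (1 + J ^ 2) <= 1) by nra.
  assert (Hs2 : 0 <= s ^ 2 <= 1) by nra.
  assert (s ^ 4 * (1 + J ^ 2) ^ 2 <= 1).
  { replace (s ^ 4 * (1 + J ^ 2) ^ 2) with (s ^ 2 * (s * (1 + J ^ 2)) ^ 2) by ring. nra. }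
  assert (s ^ 4 * (4 * alpha ^ 2 * z ^ 2) <= 4 * alpha ^ 2 * z ^ 2).
  { replace (s ^ 4) with (s ^ 2 * s ^ 2) by ring. pose proof (pow2_ge_0 (alpha * z)). nra. }
  nra.
Qed.

End GaugeComparison.

Lemma dg4_profile_origin (alpha I z : R) :
  dg4 alpha (1, - I, - z) Horigin = (1 + I ^ 2) ^ 2 + 4 * alpha ^ 2 * z ^ 2.
Proof. unfold dg4; simpl. ring. Qed.

Lemma dg4_profile_step (alpha I J z s : R) :
  dg4 alpha (1, - I, - z) (Hdil s (1, - J, - z)) =
  ((s - 1) ^ 2 + (I - J * s) ^ 2) ^ 2 + 4 * alpha ^ 2 * (z * (1 - s ^ 2) + s * (J - I) / 2) ^ 2.
Proof. unfold dg4; simpl. field. Qed.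

Lemma pow_le_base (L : R) (k : nat) : 0 <= L <= 1 -> (1 <= k)%nat -> L ^ k <= L.
Proof.
  intros HL Hk. destruct k as [|k]; [lia|]. simpl.
  assert (L ^ k <= 1) by (rewrite <- (pow1 k); apply pow_incr; lra).
  assert (0 <= L ^ k) by (apply pow_le; lra). nra.
Qed.

Definition crowd_bound (n : nat) : R := 1 + INR n ^ 2.

Definition crowd_height (alpha : R) (n : nat) : R := 4 * crowd_bound n ^ 2 / alpha ^ 2.

Definition crowd_ratio (alpha : R) (n : nat) : R :=
  / (4 * crowd_height alpha n + crowd_bound n + 1).

Definition crowd_point (alpha : R) (n k : nat) : Hpt :=
  Hdil (crowd_ratio alpha n ^ k) (1, - INR k, - crowd_height alpha n).

Section Crowd.

Variables (alpha : R) (n : nat).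
Hypothesis alpha_pos : 0 < alpha.

Local Notation M := (crowd_bound n).
Local Notation z := (crowd_height alpha n).
Local Notation L := (crowd_ratio alpha n).
Local Notation P := (crowd_point alpha n).

Lemma crowd_bound_ge1 : 1 <= M.
Proof. unfold crowd_bound. pose proof (pow2_ge_0 (INR n)). lra. Qed.

Lemma crowd_height_pos : 0 < z.
Proof.
  pose proof crowd_bound_ge1. unfold crowd_height.
  apply Rdiv_lt_0_compat; [nra | apply pow_lt, alpha_pos].
Qed.

Lemma crowd_height_eq : alpha ^ 2 * z = 4 * M ^ 2.
Proof. unfold crowd_height. field. lra. Qed.

Lemma crowd_ratio_spec : 0 < L /\ 4 * L * z <= 1 /\ L * M <= 1.
Proof.
  pose proof crowd_bound_ge1. pose proof crowd_height_pos.
  assert (HD : 0 < 4 * z + M + 1) by lra.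
  assert (HL : L * (4 * z + M + 1) = 1) by (unfold crowd_ratio; field; lra).
  assert (0 < L) by (apply Rinv_0_lt_compat, HD).
  repeat split; nra.
Qed.

Lemma crowd_point_dg4_origin (k : nat) :
  dg4 alpha (P k) Horigin = (L ^ k) ^ 4 * ((1 + INR k ^ 2) ^ 2 + 4 * alpha ^ 2 * z ^ 2).
Proof.
  unfold crowd_point. rewrite <- (Hdil_origin (L ^ k)), dg4_dil, dg4_profile_origin.
  reflexivity.
Qed.

Lemma crowd_point_separation (i j : nat) : (i < j)%nat -> (j <= n)%nat ->
  dg4 alpha (P i) Horigin < dg4 alpha (P i) (P j) /\
  dg4 alpha (P j) Horigin < dg4 alpha (P i) (P j).
Proof.
  intros Hij Hjn.
  destruct crowd_ratio_spec as [HL0 [HLz HLM]].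
  set (a := L ^ i). set (s := L ^ (j - i)).
  assert (Ha : 0 < a ^ 4) by (apply pow_lt, pow_lt, HL0).
  assert (Hs0 : 0 < s) by (apply pow_lt, HL0).
  assert (HsL : s <= L).
  { apply pow_le_base; [|lia]. pose proof crowd_bound_ge1. split; nra. }
  assert (HPj : P j = Hdil a (Hdil s (1, - INR j, - z))).
  { unfold crowd_point. rewrite Hdil_mul. unfold a, s. rewrite <- pow_add.
    replace (i + (j - i))%nat with j by lia. reflexivity. }
  assert (Hstep : dg4 alpha (P i) (P j) =
                  a ^ 4 * dg4 alpha (1, - INR i, - z) (Hdil s (1, - INR j, - z))).
  { rewrite HPj. apply dg4_dil. }
  assert (HI : 0 <= INR i) by apply pos_INR.
  assert (HIJ : INR i + 1 <= INR j) by (rewrite <- S_INR; apply le_INR; lia).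
  assert (HJ : 1 + INR j ^ 2 <= M).
  { unfold crowd_bound. assert (INR j <= INR n) by (apply le_INR, Hjn). nra. }
  pose proof crowd_bound_ge1. pose proof crowd_height_pos. pose proof crowd_height_eq.
  rewrite Hstep, dg4_profile_step, !crowd_point_dg4_origin.
  assert (HLj : (L ^ j) ^ 4 = a ^ 4 * s ^ 4).
  { unfold a, s. rewrite <- Rpow_mult_distr, <- pow_add. f_equal. f_equal. lia. }
  rewrite HLj, (Rmult_assoc (a ^ 4)).
  split; apply Rmult_lt_compat_l; try exact Ha.
  - apply step_gauge_gt_start with (M := M); nra.
  - apply step_gauge_gt_scaled_end with (M := M); nra.
Qed.

Lemma crowd_point_crowded : crowded (dg alpha) Horigin P n.
Proof.
  split.
  - intros k _. apply dg_pos_of_dg4_pos. rewrite crowd_point_dg4_origin.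
    destruct crowd_ratio_spec as [HL0 _].
    apply Rmult_lt_0_compat; [apply pow_lt, pow_lt, HL0|].
    pose proof (pow2_ge_0 (INR k)). pose proof (pow2_ge_0 (alpha * z)). nra.
  - intros m k Hm Hk Hmk. apply dg_lt_of_dg4_lt.
    destruct (Nat.lt_gt_cases m k) as [[Hlt|Hgt] _]; [exact Hmk| |].
    + exact (proj1 (crowd_point_separation m k Hlt Hk)).
    + rewrite (dg4_sym alpha (P m) (P k)). exact (proj2 (crowd_point_separation k m Hgt Hm)).
Qed.

End Crowd.

Theorem mainTheorem6 (alpha : R) (Halpha : 0 < alpha)
  (Hdist : is_distance (dg alpha)) : ~ BCP (dg alpha).
Proof.
  apply not_BCP_of_crowded; [apply dg_refl|].
  intro n. exists Horigin, (crowd_point alpha n).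
  apply crowd_point_crowded, Halpha.
Qed.
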